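(* Let $\mathfrak g$ be a real almost abelian Lie algebra with $\dim\mathfrak g\ge 6$. Then every LCS structure $(\omega,\theta)$ on $\mathfrak g$ is of the second kind.
   Context: An almost abelian Lie algebra is a real Lie algebra with an abelian ideal of codimension one. An LCS structure on $\mathfrak g$ is a pair $(\omega,\theta)$ with $\omega\in\Lambda^2\mathfrak g^*$ non-degenerate and $\theta\in\mathfrak g^*$ closed and nonzero, such that $d\omega=\theta\wedge\omega$. Let $\mathfrak g_\omega=\{x\in\mathfrak g:\ \omega([x,y],z)+\omega(y,[x,z])=0\ \text{for all }y,z\in\mathfrak g\}$ (a Lie subalgebra). The LCS structure is of the first kind if $\theta|_{\mathfrak g_\omega}$ is surjective onto $\mathbb R$, and of the second kind if $\theta|_{\mathfrak g_\omega}\equiv0$. *)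

(* real Lie algebras of dimension n modelled on 'rV[R]_n,
   R : realType (a model of the real numbers). *)
From mathcomp Require Import all_boot all_order all_algebra.
From mathcomp Require Import reals.
Set Implicit Arguments. Unset Strict Implicit. Unset Printing Implicit Defensive.
Import GRing.Theory Num.Theory.
Local Open Scope ring_scope.

Section Lie.
Variables (R : realType) (n : nat).
Notation V := 'rV[R]_n.

Definition is_lie_bracket (br : V -> V -> V) : Prop :=
  [/\ (forall (a : R) (x y z : V), br (a *: x + y) z = a *: br x z + br y z),
      (forall (a : R) (x y z : V), br z (a *: x + y) = a *: br z x + br z y),
      (forall x : V, br x x = 0) &
      (forall x y z : V, br x (br y z) + br y (br z x) + br z (br x y) = 0)].

Definition almost_abelian (br : V -> V -> V) : Prop :=
  exists U : {vspace V},
    [/\ (\dim U).+1 = n,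
        (forall x u : V, u \in U -> br x u \in U) &
        (forall u v : V, u \in U -> v \in U -> br u v = 0)].

Definition bilinear_form (w : V -> V -> R) : Prop :=
  (forall (a : R) (x y z : V), w (a *: x + y) z = a * w x z + w y z) /\
  (forall (a : R) (x y z : V), w z (a *: x + y) = a * w z x + w z y).

Definition linear_form (t : V -> R) : Prop :=
  forall (a : R) (x y : V), t (a *: x + y) = a * t x + t y.

(* Chevalley--Eilenberg differential of a 2-form and wedge with a 1-form *)
Definition d2 (br : V -> V -> V) (w : V -> V -> R) (x y z : V) : R :=
  - w (br x y) z + w (br x z) y - w (br y z) x.

Definition wedge12 (t : V -> R) (w : V -> V -> R) (x y z : V) : R :=
  t x * w y z - t y * w x z + t z * w x y.

Definition is_LCS (br : V -> V -> V) (w : V -> V -> R) (t : V -> R) : Prop :=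
  bilinear_form w /\
  (forall x : V, w x x = 0) /\
  (forall x : V, (forall y : V, w x y = 0) -> x = 0) /\
  linear_form t /\
  (forall x y : V, t (br x y) = 0) /\                           (* dθ = 0 *)
  (exists x : V, t x != 0) /\
  (forall x y z : V, d2 br w x y z = wedge12 t w x y z).       (* dω = θ∧ω *)

Definition g_omega (br : V -> V -> V) (w : V -> V -> R) (x : V) : Prop :=
  forall y z : V, w (br x y) z + w y (br x z) = 0.

Definition LCS_second_kind (br : V -> V -> V) (w : V -> V -> R) (t : V -> R) : Prop :=
  forall x : V, g_omega br w x -> t x = 0.

End Lie.

(* Suppose x lies in g_ω with θ(x) ≠ 0, and let u be the abelian ideal of
   codimension one.  Evaluating dω = θ∧ω on (x, y, z) with y, z ∈ u, the
   terms containing [y, z] = 0 disappear and, since ad x preserves ω, so do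
   the other bracket terms; hence θ(x) ω(y, z) = θ(y) ω(x, z) - θ(z) ω(x, y).
   Because dim u ≥ 5 > 3, some nonzero y ∈ u is killed by the three linear
   forms θ, ω(x, ·) and ω(·, e), where u + ℝe = g.  The identity then makes
   ω(y, ·) vanish on u and on e, i.e. on all of g, against non-degeneracy. *)
From HB Require Import structures.
From mathcomp Require Import all_boot all_algebra.
From mathcomp Require Import reals.

Set Implicit Arguments.
Unset Strict Implicit.
Unset Printing Implicit Defensive.

Import GRing.Theory.
Local Open Scope ring_scope.

Section CommonZero.
Variables (K : fieldType) (vT : vectType K) (m : nat) (f : 'I_m -> vT -> K).
Hypothesis f_linear : forall i a u v, f i (a *: u + v) = a * f i u + f i v.

Definition forms_row (v : vT) : 'rV[K]_m := \row_i f i v.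

Lemma forms_row_linear : linear forms_row.
Proof. by move=> a u v; apply/rowP => i; rewrite !mxE f_linear. Qed.

HB.instance Definition _ :=
  GRing.isLinear.Build K vT 'rV[K]_m *:%R forms_row forms_row_linear.

Lemma forms_common_zero (U : {vspace vT}) :
  (m < \dim U)%N -> exists2 u, (u \in U) && (u != 0) & forall i, f i u = 0.
Proof.
move=> ltmU; pose F := linfun forms_row.
have dimFU : (\dim (F @: U) <= m)%N.
  by have := dimvS (subvf (F @: U)); rewrite dimvf /dim /= mul1n.
have : (U :&: lker F)%VS != 0%VS.
  rewrite -dimv_eq0 -lt0n -(ltn_add2r (\dim (F @: U))) limg_ker_dim add0n.
  exact: leq_ltn_trans dimFU ltmU.
rewrite -vpick0; set u := vpick _ => unz.
have := memv_pick (U :&: lker F).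
rewrite memv_cap memv_ker => /andP[uU /eqP Fu].
exists u; first by rewrite uU unz.
by move=> i; have /rowP/(_ i) := Fu; rewrite lfunE !mxE.
Qed.

End CommonZero.

Lemma codim1_addv_line (K : fieldType) (vT : vectType K) (U : {vspace vT}) :
  (\dim U).+1 = \dim {:vT} -> exists e, (U + <[e]>)%VS = fullv.
Proof.
move=> dimU; exists (vpick (U^C)%VS).
have dimC : \dim (U^C)%VS = 1%N by rewrite dimv_compl -dimU subSnn.
have Ce : (U^C)%VS = <[vpick (U^C)%VS]>%VS.
  apply/eqP; rewrite eq_sym eqEdim dim_vline vpick0 -dimv_eq0 dimC.
  by rewrite -memvE memv_pick.
by rewrite -Ce addv_complf.
Qed.

Section LCSForms.
Variables (R : realType) (n : nat).
Notation V := 'rV[R]_n.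
Variables (br : V -> V -> V) (w : V -> V -> R) (t : V -> R).

Lemma bilinear_alt_skew :
  bilinear_form w -> (forall x, w x x = 0) -> forall a b, w a b = - w b a.
Proof.
move=> [wl wr] walt a b; apply/eqP; rewrite -addr_eq0.
have wDl c d e : w (c + d) e = w c e + w d e.
  by have := wl 1 c d e; rewrite scale1r mul1r.
have wDr c d e : w e (c + d) = w e c + w e d.
  by have := wr 1 c d e; rewrite scale1r mul1r.
by have := walt (a + b); rewrite wDl !wDr !walt add0r addr0 => ->.
Qed.

Lemma bilinear_vanish_addv_line (U : {vspace V}) e u :
  bilinear_form w -> (U + <[e]>)%VS = fullv ->
  {in U, forall a, w u a = 0} -> w u e = 0 -> forall z, w u z = 0.
Proof.
move=> [_ wr] Ue wuU wue z; have : z \in (U + <[e]>)%VS by rewrite Ue memvf.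
case/memv_addP=> a aU [b /vlineP[k ->] ->].
by rewrite addrC wr wue mulr0 add0r wuU.
Qed.

Lemma lcs_wedge_commuting x y z : is_LCS br w t -> g_omega br w x ->
  br y z = 0 -> wedge12 t w x y z = 0.
Proof.
move=> [[wl wr] [walt [_ [_ [_ [_ dw]]]]]] gx yz0.
have w0l e : w 0 e = 0.
  by have := wl (-1) e e e; rewrite scaleN1r addNr mulN1r addNr.
rewrite -dw /d2 yz0 w0l subr0.
have /eqP := gx y z; rewrite addr_eq0 => /eqP->.
by rewrite (bilinear_alt_skew (conj wl wr) walt (br x z)) opprK subrr.
Qed.

End LCSForms.

Theorem corollary4p3 (R : realType) (n : nat) (br : 'rV[R]_n -> 'rV[R]_n -> 'rV[R]_n)
    (w : 'rV[R]_n -> 'rV[R]_n -> R) (t : 'rV[R]_n -> R) :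
  (6 <= n)%N -> is_lie_bracket br -> almost_abelian br ->
  is_LCS br w t -> LCS_second_kind br w t.
Proof.
move=> n6 _ [U [dimU _ abU]] lcs x gx; apply/eqP; apply: contraT => tx0.
have [e Ue] : exists e, (U + <[e]>)%VS = fullv.
  by apply: codim1_addv_line; rewrite dimU dimvf /dim /= mul1n.
have [wlr [_ [wnd [tl _]]]] := lcs; have [wl wr] := wlr.
pose forms := [:: t; w x; fun v => w v e].
have [u /andP[uU unz] u0] : exists2 u, (u \in U) && (u != 0) &
    forall i : 'I_3, nth (fun _ => 0) forms i u = 0.
  apply: forms_common_zero; last by rewrite -ltnS dimU ltnW.
  by case=> [[|[|[]]]] //= _ a v1 v2; rewrite ?tl ?wl ?wr.
have tu : t u = 0 := u0 0.
have wxu : w x u = 0 := u0 1.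
have wue : w u e = 0 := u0 2.
have wuU a : a \in U -> w u a = 0.
  move=> aU; have := lcs_wedge_commuting lcs gx (abU _ _ uU aU).
  rewrite /wedge12 tu wxu !mul0r mulr0 subr0 addr0 => /eqP.
  by rewrite mulf_eq0 (negbTE tx0) => /eqP.
by move: unz; rewrite (wnd u (bilinear_vanish_addv_line wlr Ue wuU wue)) eqxx.
Qed.
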